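(* Let $m\geq n$ and $k$ be integers with $2\leq k\leq n$. Then $$ext(m,n,(k-1)K_2)+2\leq rb(K_{m,n},kK_2)\leq ext(m,n,kK_2)+1.$$
   Context: $kK_2$ denotes a matching with $k$ edges, and $K_{m,n}$ the complete bipartite graph with parts of sizes $m$ and $n$. For a graph $H$, $ext(m,n,H)$ is the maximum number of edges of a bipartite graph with bipartition $A\cup B$, $|A|=m$, $|B|=n$, containing no subgraph isomorphic to $H$. An edge-coloring contains a rainbow copy of $H$ if there is a subgraph isomorphic to $H$ whose edges have pairwise distinct colors. $rb(G,H)$ is the minimum number $r$ such that every edge-coloring of $G$ using at least $r$ colors contains a rainbow copy of $H$ (equivalently, one plus the maximum number of colors in an edge-coloring of $G$ with no rainbow $H$). *)

From mathcomp Require Import all_boot.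
From mathcomp Require Import boolp.
Set Implicit Arguments. Unset Strict Implicit. Unset Printing Implicit Defensive.

(* Bipartite graphs with bipartition A = 'I_m, B = 'I_n are edge sets
   E : {set 'I_m * 'I_n}; an edge is a pair (a, b). K_{m,n} is [set: 'I_m * 'I_n]. *)

Notation edge m n := (prod (ordinal m) (ordinal n)).

Definition is_matching (m n : nat) (M : {set edge m n}) : bool :=
  [forall e1 in M, forall e2 in M,
     (e1 != e2) ==> ((e1.1 != e2.1) && (e1.2 != e2.2))].

Definition contains_kK2 (m n : nat) (E : {set edge m n}) (k : nat) : bool :=
  [exists M : {set edge m n}, [&& M \subset E, #|M| == k & is_matching M]].

Definition ext_kK2 (m n k : nat) : nat :=
  \max_(E : {set edge m n} | ~~ contains_kK2 E k) #|E|.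

Definition ncolors (m n : nat) (c : edge m n -> nat) : nat :=
  size (undup [seq c e | e <- enum [set: edge m n]]).

Definition has_rainbow_kK2 (m n : nat) (c : edge m n -> nat) (k : nat) : bool :=
  [exists M : {set edge m n},
     [&& #|M| == k, is_matching M &
         [forall e1 in M, forall e2 in M, (c e1 == c e2) ==> (e1 == e2)]]].

Definition rb_good (m n k r : nat) : Prop :=
  forall c : edge m n -> nat, r <= ncolors c -> has_rainbow_kK2 c k.

Lemma rb_good_ex (m n k : nat) : exists r, `[< rb_good m n k r >].
Proof.
exists (m * n).+1; apply/asboolP => c H; exfalso.
move: H; rewrite ltnNge => /negP; apply.
rewrite /ncolors; apply: leq_trans (size_undup _) _.
by rewrite size_map -cardE cardsT card_prod !card_ord.
Qed.

Definition rb_kK2 (m n k : nat) : nat := ex_minn (rb_good_ex m n k).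

From mathcomp Require Import all_boot.
From mathcomp Require Import boolp.

(* Upper bound: one edge of each colour gives a graph with [ncolors c] edges
   on which the colouring is injective; with more than ext(m,n,kK_2) edges it
   contains kK_2, which is then rainbow.
   Lower bound: colour the edges of an extremal (k-1)K_2-free graph G with
   distinct colours and all remaining edges (there are some, since K_{m,n}
   contains (k-1)K_2) with one extra colour.  A rainbow kK_2 has at most one
   edge outside G, so removing it would leave a (k-1)K_2 inside G. *)

Section BipartiteRainbow.

Context {m n : nat}.
Implicit Types (E G M : {set edge m n}) (c : edge m n -> nat).

Lemma matchingS M M' : M' \subset M -> is_matching M -> is_matching M'.
Proof.
move=> sMM' /forallP matchM; apply/forallP => e1; apply/implyP => e1M'.
apply/forallP => e2; apply/implyP => e2M'.
have /implyP/(_ (subsetP sMM' _ e1M'))/forallP/(_ e2)/implyP := matchM e1.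
by apply; apply: (subsetP sMM').
Qed.

Lemma contains_kK2_setT j : j <= m -> j <= n -> contains_kK2 [set: edge m n] j.
Proof.
move=> jm jn; pose diag (i : 'I_j) := (widen_ord jm i, widen_ord jn i).
have diag_inj : injective diag by move=> i1 i2 [eq_i _]; apply: ord_inj.
apply/existsP; exists (diag @: 'I_j).
rewrite subsetT card_imset // card_ord eqxx /=.
apply/forallP => e1; apply/implyP => /imsetP [i1 _ ->].
apply/forallP => e2; apply/implyP => /imsetP [i2 _ ->].
rewrite (inj_eq diag_inj); apply/implyP => ne_i.
by rewrite -!(inj_eq val_inj) /= (inj_eq val_inj) ne_i.
Qed.

Lemma ext_kK2_max k E : ~~ contains_kK2 E k -> #|E| <= ext_kK2 m n k.
Proof. exact: (@leq_bigmax_cond _ (fun E => ~~ contains_kK2 E k) (fun E => #|E|)). Qed.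

Lemma ext_kK2_attained k :
  0 < k -> exists2 G : {set edge m n}, ~~ contains_kK2 G k & #|G| = ext_kK2 m n k.
Proof.
move=> k_gt0.
have free_set0 : ~~ @contains_kK2 m n set0 k.
  apply/negP => /existsP [M /and3P [+ /eqP cardM _]].
  by rewrite subset0 => /eqP M0; rewrite -cardM M0 cards0 in k_gt0.
have free_gt0 : 0 < #|[pred E : {set edge m n} | ~~ contains_kK2 E k]|.
  by apply/card_gt0P; exists set0.
have [G freeG extG] := eq_bigmax_cond (fun E => #|E|) free_gt0.
by exists G => //; rewrite /ext_kK2 extG.
Qed.

Lemma card_le_ncolors c E : {in E &, injective c} -> #|E| <= ncolors c.
Proof.
move=> injc; rewrite cardE -(size_map c) /ncolors.
apply: uniq_leq_size.
  by rewrite map_inj_in_uniq ?enum_uniq // => x y; rewrite !mem_enum; apply: injc.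
move=> x /mapP [e _ ->]; rewrite mem_undup; apply: map_f.
by rewrite mem_enum inE.
Qed.

Lemma ncolors_le_card c E :
  (forall e, exists2 x, x \in E & c x = c e) -> ncolors c <= #|E|.
Proof.
move=> onto; rewrite /ncolors cardE -(size_map c).
apply: uniq_leq_size; first exact: undup_uniq.
move=> x; rewrite mem_undup => /mapP [e _ ->]; have [y yE <-] := onto e.
by apply: map_f; rewrite mem_enum.
Qed.

Definition colour_rep c (e : edge m n) : edge m n := choose (fun x => c x == c e) e.

Lemma colour_repE c e : c (colour_rep c e) = c e.
Proof. exact/eqP/(chooseP (P := fun x => c x == c e)). Qed.

Lemma colour_rep_eq c e1 e2 : c e1 = c e2 -> colour_rep c e1 = colour_rep c e2.
Proof.
by rewrite /colour_rep => ce; rewrite ce; apply: choose_id; rewrite /= ?ce.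
Qed.

Lemma colour_transversal c :
  exists2 E : {set edge m n}, {in E &, injective c} & ncolors c <= #|E|.
Proof.
exists (colour_rep c @: setT).
  move=> _ _ /imsetP [e1 _ ->] /imsetP [e2 _ ->].
  by rewrite !colour_repE => /colour_rep_eq.
apply: ncolors_le_card => e.
by exists (colour_rep c e); [apply: imset_f | apply: colour_repE].
Qed.

Lemma rainbow_of_injective c E k :
  {in E &, injective c} -> contains_kK2 E k -> has_rainbow_kK2 c k.
Proof.
move=> injc /existsP [M /and3P [sME cardM matchM]].
apply/existsP; exists M; rewrite cardM matchM /=.
apply/forallP => e1; apply/implyP => e1M; apply/forallP => e2; apply/implyP => e2M.
by apply/implyP => /eqP ce; apply/eqP; apply: injc ce; apply: (subsetP sME).
Qed.

Definition rainbow_on G (e : edge m n) : nat :=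
  if e \in G then (enum_rank e).+1 else 0.

Lemma ncolors_rainbow_on G e0 : e0 \notin G -> #|G|.+1 <= ncolors (rainbow_on G).
Proof.
move=> e0G; have -> : #|G|.+1 = #|e0 |: G| by rewrite cardsU1 e0G.
apply: card_le_ncolors => x y /setU1P [-> | xG] /setU1P [-> | yG] //;
  rewrite /rainbow_on ?(negbTE e0G) ?xG ?yG //.
by case=> /val_inj/enum_rank_inj.
Qed.

Lemma rainbow_on_contains G k :
  0 < k -> has_rainbow_kK2 (rainbow_on G) k -> contains_kK2 G k.-1.
Proof.
move=> k_gt0 /existsP [M /and3P [/eqP cardM matchM /forallP rainbowM]].
have injM : {in M &, injective (rainbow_on G)}.
  move=> e1 e2 e1M e2M ce; apply/eqP.
  by have /implyP/(_ e1M)/forallP/(_ e2) := rainbowM e1; rewrite e2M ce eqxx.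
have [e eM sMeG] : exists2 e : edge m n, e \in M & M :\ e \subset G.
  case: (pickP [pred x in M :\: G]) => [x /setDP [xM xG] | noneout].
    exists x => //; apply/subsetP => f /setD1P [fx fM]; apply/negPn/negP => fG.
    by move/eqP: fx; apply; apply: injM; rewrite // /rainbow_on (negbTE fG) (negbTE xG).
  have [e eM] : exists e, e \in M by apply/card_gt0P; rewrite cardM.
  exists e => //; apply/subsetP => f /setD1P [_ fM].
  by have := noneout f; rewrite /= inE fM andbT => /negbFE.
apply/existsP; exists (M :\ e); rewrite sMeG (matchingS _ _ (subsetDl M _) matchM).
by rewrite -cardM (cardsD1 e M) eM add1n /= eqxx.
Qed.

Lemma rb_kK2_min k r :
  (forall c, r <= ncolors c -> has_rainbow_kK2 c k) -> rb_kK2 m n k <= r.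
Proof. by move=> good; rewrite /rb_kK2; case: ex_minnP => r' _; apply; apply/asboolP. Qed.

Lemma ncolors_lt_rb_kK2 k c : ~~ has_rainbow_kK2 c k -> ncolors c < rb_kK2 m n k.
Proof.
move=> norainbow; rewrite /rb_kK2; case: ex_minnP => r /asboolP good _.
by rewrite ltnNge; apply: contra norainbow; apply: good.
Qed.

End BipartiteRainbow.

Theorem mainTheorem3 (m n k : nat) :
  n <= m -> 2 <= k -> k <= n ->
  ext_kK2 m n k.-1 + 2 <= rb_kK2 m n k <= ext_kK2 m n k + 1.
Proof.
move=> nm k2 kn; have k1n : k.-1 <= n by rewrite (leq_trans (leq_pred k)).
have k1_gt0 : 0 < k.-1 by rewrite ltn_predRL.
apply/andP; split.
- have [G freeG <-] := @ext_kK2_attained m n _ k1_gt0.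
  have [e0 _ e0G] : exists2 e0, e0 \in [set: edge m n] & e0 \notin G.
    apply/subsetPn; apply: contra freeG; rewrite subTset => /eqP ->.
    exact: contains_kK2_setT (leq_trans k1n nm) k1n.
  rewrite addn2; apply: leq_ltn_trans (ncolors_rainbow_on _ _ e0G) _.
  apply: ncolors_lt_rb_kK2; apply: contra freeG.
  by apply: rainbow_on_contains; apply: ltnW.
- apply: rb_kK2_min => c; rewrite addn1 => ext_lt.
  have [E injE ncolE] := colour_transversal c.
  apply: (rainbow_of_injective _ _ _ injE); apply: contraLR ext_lt => freeE.
  by rewrite -leqNgt (leq_trans ncolE) ?ext_kK2_max.
Qed.
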